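(* Let $k\ge 3$ be an integer. Let $n=k(k+1)+2$ and let $Z_k$ be the $k$-path power with $k$-path layout $\langle v_1,\ldots,v_n\rangle$. Let $m=(2k-1)(k+1)+1$, let $J_k$ be the $k$-path power with $k$-path layout $\langle z_1,\ldots,z_m\rangle$, and let $g=k^2-1$. Then every proper induced subgraph of $Z_k$ is isomorphic to an induced subgraph of $J_k-z_g$.
   Context: For an integer $k\ge 1$ and an ordering $\langle x_1,\ldots,x_n\rangle$ of $n$ vertices, the $k$-path power with $k$-path layout $\langle x_1,\ldots,x_n\rangle$ is the graph on $\{x_1,\ldots,x_n\}$ in which, for $i<j$, $x_i$ and $x_j$ are adjacent if and only if $j-i\le k$. $J_k-z_g$ denotes $J_k$ with the vertex $z_g$ deleted. A proper induced subgraph is an induced subgraph on a proper subset of the vertex set. *)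

From mathcomp Require Import all_boot.
Set Implicit Arguments. Unset Strict Implicit. Unset Printing Implicit Defensive.

(* The k-path power with k-path layout <x_1,...,x_n>: vertices are 'I_n,
   vertex x_i (1-based) being the ordinal i-1; x_i, x_j (i<>j) adjacent iff |i-j| <= k. *)
Definition path_power_adj (k n : nat) : rel 'I_n :=
  fun i j => [&& i != j, (i <= j + k) & (j <= i + k)].

Arguments path_power_adj : clear implicits.

Definition embeds_induced (T U : finType) (eT : rel T) (eU : rel U)
    (S : {set T}) (A : {set U}) : Prop :=
  exists f : T -> U,
    [/\ {in S &, injective f},
        {in S, forall x, f x \in A} &
        {in S &, forall x y, eU (f x) (f y) = eT x y}].

From mathcomp Require Import all_boot.
From mathcomp Require Import zify.

(* A path power is determined by the distances between the positions of its
   vertices, so any map of positions preserving distances (a translation or a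
   reflection) is an induced embedding.  Align the missing vertex v of Z_k with
   z_g: for n = k^2 + k + 2, m = 2k^2 + k and g = k^2 - 1 the image of Z_k - v
   fits inside J_k, translating when v lies left of z_g and reflecting
   otherwise. *)

Definition natdist (a b : nat) : nat := (a - b) + (b - a).

Lemma path_power_adjE (k n : nat) (i j : 'I_n) :
  path_power_adj k n i j = (0 < natdist i j <= k).
Proof.
rewrite /path_power_adj /natdist -(inj_eq val_inj) /=.
by case: (ltngtP i j) => ?; apply/and3P/andP => -[] *; split => //; lia.
Qed.

Lemma natdist_eq0 (a b : nat) : (natdist a b == 0) = (a == b).
Proof. by rewrite /natdist; apply/eqP/eqP; lia. Qed.

Section PathPowerEmbedding.

Variables (k n m : nat).
Hypothesis m_gt0 : 0 < m.

Lemma embeds_path_power_isometry (S : {set 'I_n}) (P : pred nat) (h : nat -> nat) :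
    {in S, forall x : 'I_n, h x < m /\ P (h x)} ->
    {in S &, forall x y : 'I_n, natdist (h x) (h y) = natdist x y} ->
  embeds_induced (path_power_adj k n) (path_power_adj k m) S [set z : 'I_m | P z].
Proof.
move=> h_range h_iso.
have hE x : x \in S -> val (insubd (Ordinal m_gt0) (h x)) = h x.
  by move=> /h_range[lt_hx _]; rewrite val_insubd lt_hx.
exists (fun x : 'I_n => insubd (Ordinal m_gt0) (h x)); split.
- move=> x y xS yS /(congr1 val); rewrite !hE // => /eqP.
  by rewrite -natdist_eq0 h_iso // natdist_eq0 => /eqP /val_inj.
- by move=> x xS; rewrite inE hE //; case: (h_range x xS).
- by move=> x y xS yS; rewrite !path_power_adjE !hE // h_iso.
Qed.

Variables (g : nat) (v : 'I_n) (S : {set 'I_n}).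
Hypothesis vNS : v \notin S.

Let neq_v x : x \in S -> (x : nat) != v.
Proof. by move=> xS; apply: contraNneq vNS => /val_inj <-. Qed.

Lemma path_power_delete_embeds_shift :
    v <= g -> g + (n - v) <= m ->
  embeds_induced (path_power_adj k n) (path_power_adj k m) S [set z : 'I_m | z != g :> nat].
Proof.
move=> le_vg fits.
apply: (@embeds_path_power_isometry S (fun a => a != g) (fun a => a + (g - v))).
- move=> x /neq_v x_v; have := ltn_ord x; split; lia.
- by move=> x y _ _; rewrite /natdist; lia.
Qed.

Lemma path_power_delete_embeds_flip :
    n.-1 - v <= g -> g + v < m ->
  embeds_induced (path_power_adj k n) (path_power_adj k m) S [set z : 'I_m | z != g :> nat].
Proof.
move=> le_rev_vg fits.
apply: (@embeds_path_power_isometry S (fun a => a != g) (fun a => g + v - a)).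
- move=> x /neq_v x_v; have := ltn_ord x; split; lia.
- move=> x y _ _; have := ltn_ord x; have := ltn_ord y; rewrite /natdist; lia.
Qed.

End PathPowerEmbedding.

Theorem mainTheorem2 (k : nat) (hk : 3 <= k)
    (S : {set 'I_(k * (k + 1) + 2)}) (hS : S \proper [set: 'I_(k * (k + 1) + 2)]) :
  embeds_induced (path_power_adj k (k * (k + 1) + 2))
                 (path_power_adj k ((2 * k - 1) * (k + 1) + 1))
                 S [set z : 'I_((2 * k - 1) * (k + 1) + 1) | nat_of_ord z != k ^ 2 - 2].
Proof.
move/properP: hS => [_ [v _ vNS]].
have := ltn_ord v; have k2E : k ^ 2 = k * k by rewrite expnS expn1.
have k2_ge : 3 * k <= k ^ 2 by rewrite k2E leq_mul2r hk orbT.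
have m_gt0 : 0 < (2 * k - 1) * (k + 1) + 1 by rewrite addn1.
case: (leqP v (k ^ 2 - 2)) => [le_vg | lt_gv] lt_vn.
- by apply: path_power_delete_embeds_shift => //; lia.
- by apply: path_power_delete_embeds_flip => //; lia.
Qed.
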